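(* Let $n\ge3$, let $U$ be the cyclic shift on $\mathbb C^n$ given by $Ue_k=e_{k+1}$ (indices mod $n$), and let $T=U+I$. Then \[\|T\|_m=\frac2n\sum_{k=0}^{n-1}\Big|\cos\frac{k\pi}n\Big|=\begin{cases}\dfrac{2\cos(\frac\pi{2n})}{n\sin(\frac\pi{2n})}& n\text{ even},\\[2ex]\dfrac{2}{n\sin(\frac\pi{2n})}& n\text{ odd}.\end{cases}\] Consequently $\|T\|_m\to 4/\pi$ as $n\to\infty$, the values for odd $n$ decreasing to $4/\pi$ and the values for even $n$ increasing to $4/\pi$.
   Context: $\|T\|_m$ is the norm of the Schur multiplier $R=[r_{ij}]\mapsto[t_{ij}r_{ij}]$ on $n\times n$ complex matrices with the operator norm, where $[t_{ij}]$ is the matrix of $T$ in the standard basis $e_1,\dots,e_n$. *)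

From HB Require Import structures.
From mathcomp Require Import all_boot all_order all_algebra.
From mathcomp Require Import all_classical all_reals all_analysis.
From mathcomp Require Import complex.
Set Implicit Arguments. Unset Strict Implicit. Unset Printing Implicit Defensive.
Import Order.TTheory GRing.Theory Num.Theory.
Import numFieldNormedType.Exports.
Local Open Scope ring_scope.
Local Open Scope classical_set_scope.

Definition vnorm2 (R : realType) (n : nat) (x : 'cV[R[i]]_n) : R :=
  Num.sqrt (\sum_(k < n) (ComplexField.Normc.normc (x k 0)) ^+ 2).

Definition opnorm (R : realType) (n : nat) (A : 'M[R[i]]_n) : R :=
  sup [set vnorm2 (A *m x) | x in [set x : 'cV[R[i]]_n | vnorm2 x <= 1]].

Definition schur_mul (R : realType) (n : nat) (T A : 'M[R[i]]_n) : 'M[R[i]]_n :=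
  \matrix_(i, j) (T i j * A i j).

Definition schur_norm (R : realType) (n : nat) (T : 'M[R[i]]_n) : R :=
  sup [set opnorm (schur_mul T A) | A in [set A : 'M[R[i]]_n | opnorm A <= 1]].

(* cyclic shift U e_k = e_{k+1 mod n}: U i j = 1 iff i = j+1 mod n *)
Definition cshift (R : realType) (n : nat) : 'M[R[i]]_n :=
  \matrix_(i, j) ((nat_of_ord i == (j.+1 %% n)%N)%:R).

Definition Tmat (R : realType) (n : nat) : 'M[R[i]]_n := cshift R n + 1%:M.

(* Write w = exp(2 pi i / n).  The matrix T = U + I is diagonal in the Fourier
   basis: T_ij = (1/n) sum_k c_k w^(ki) w^(-kj) with symbol c_k = 1 + w^(-k).
   Hence the Schur multiplier A |-> T o A is the average
   sum_k (c_k / n) D_k A D_k^* with unitary diagonal D_k = diag(w^(ki)), so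
   ||T||_m <= (1/n) sum_k |c_k|.  Equality is attained at the unitary matrix
   with the same eigenvectors and eigenvalues c_k / |c_k|: every row sum of its
   Schur product with T is (1/n) sum_k |c_k|, so the all-ones vector is
   stretched by exactly this factor.  Since |c_k| = 2 |cos (k pi / n)|, a
   telescoping sum of cosines gives the closed form: with h = pi / (2n) the
   value is (4/pi) / (sin h / h) for odd n and (4/pi) * (h cos h / sin h) for
   even n.  Both sin x / x and x cot x decrease on (0, pi), which gives the
   monotonicity, and cos h <= ||T||_m <= 1 / cos h (up to the factor 4/pi)
   gives the limit. *)

From HB Require Import structures.
From mathcomp Require Import all_boot all_order all_algebra.
From mathcomp Require Import all_classical all_reals all_analysis.
From mathcomp Require Import complex.
From mathcomp Require Import ring lra zify.
Set Implicit Arguments. Unset Strict Implicit. Unset Printing Implicit Defensive.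
Import Order.TTheory GRing.Theory Num.Theory.
Import numFieldNormedType.Exports.
Local Open Scope ring_scope.
Local Open Scope classical_set_scope.

Lemma sum_expr_root1 (F : idomainType) (z : F) n :
  z != 1 -> z ^+ n = 1 -> \sum_(k < n) z ^+ k = 0.
Proof.
move=> z1 zn; apply/eqP; move: (subrX1 z n); rewrite zn subrr => /esym/eqP.
by rewrite mulf_eq0 subr_eq0 (negPf z1).
Qed.

Lemma cos_lt1 (R : realType) (t : R) : 0 < t < pi *+ 2 -> cos t < 1.
Proof.
move=> /andP[t0 t2pi].
have -> : t = (t / 2) *+ 2 by rewrite -mulr_natr divfK.
have : 0 < sin (t / 2) by apply: sin_gt0_pi; rewrite mulr2n in t2pi; apply/andP; split; lra.
rewrite cos_mulr2n cos2sin2 => s_gt0.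
have : 0 < sin (t / 2) ^+ 2 by rewrite exprn_gt0.
rewrite mulr2n; lra.
Qed.

Section ComplexExponential.
Variable R : realType.
Local Notation C := R[i].
Local Notation normc := (@ComplexField.Normc.normc R).

Definition expi (t : R) : C := (cos t +i* sin t)%C.

Lemma expi0 : expi 0 = 1.
Proof. by rewrite /expi cos0 sin0. Qed.

Lemma expiD a b : expi (a + b) = expi a * expi b.
Proof. by rewrite /expi /= cosD sinD; congr (_ +i* _)%C; ring. Qed.

Lemma expiN a : expi (- a) = (expi a)^*%C.
Proof. by rewrite /expi cosN sinN. Qed.

Lemma expiMn a k : expi (a *+ k) = expi a ^+ k.
Proof. by elim: k => [|k IH]; rewrite ?mulr0n ?expi0 // mulrS expiD IH exprS. Qed.

Lemma expi_mulJ a : expi a * (expi a)^*%C = 1.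
Proof. by rewrite -expiN -expiD subrr expi0. Qed.

Lemma normc_expi a : normc (expi a) = 1.
Proof. by rewrite /expi /= cos2Dsin2 sqrtr1. Qed.

Lemma expi_2pi k : expi (pi *+ 2 *+ k) = 1.
Proof. by rewrite expiMn /expi cos2pi sin2pi expr1n. Qed.

Lemma expi_neq1 t : 0 < `|t| < pi *+ 2 -> expi t != 1.
Proof.
move=> /cos_lt1; rewrite cos_norm; apply: contraTneq => -[-> _].
by rewrite ltxx.
Qed.

End ComplexExponential.


Section FourierCharacters.
Variables (R : realType) (n : nat).
Hypothesis n_gt0 : (0 < n)%N.
Local Notation C := R[i].
Local Notation N := (n%:R : R).

Definition fchar (k i : nat) : C := expi (pi *+ 2 / N * (k * i)%:R).

Lemma fcharC k i : fchar k i = fchar i k.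
Proof. by rewrite /fchar mulnC. Qed.

Lemma fcharD k i j : fchar k (i + j) = fchar k i * fchar k j.
Proof. by rewrite /fchar -expiD mulnDr natrD mulrDr. Qed.

Lemma fchar_mulJ k i : fchar k i * (fchar k i)^*%C = 1.
Proof. exact: expi_mulJ. Qed.

Lemma normc_fchar k i : ComplexField.Normc.normc (fchar k i) = 1.
Proof. exact: normc_expi. Qed.

Lemma fchar_modn k i : fchar k (i %% n) = fchar k i.
Proof.
have N_neq0 : N != 0 by rewrite pnatr_eq0 -lt0n.
rewrite [in RHS](divn_eq i n) fcharD [X in _ = X * _](_ : _ = 1) ?mul1r //.
by rewrite /fchar mulnA natrM mulrCA divfK // mulr_natl expi_2pi.
Qed.

Lemma fchar_orthogonal i j : (i < n)%N -> (j < n)%N ->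
  \sum_(k < n) fchar k i * (fchar k j)^*%C = if i == j then n%:R else 0.
Proof.
move=> ilt jlt; set t := pi *+ 2 / N * (i%:R - j%:R).
have tE (k : 'I_n) : fchar k i * (fchar k j)^*%C = expi t ^+ k.
  by rewrite /fchar -expiN -expiD -expiMn /t !natrM -mulr_natr; congr expi; ring.
rewrite (eq_bigr _ (fun k _ => tE k)).
case: eqP => [ij|/eqP ij].
  by rewrite /t ij subrr mulr0 expi0 (eq_bigr (fun _ => 1)) ?sumr_const ?card_ord // => *; rewrite expr1n.
apply: sum_expr_root1; last first.
  rewrite -expiMn -(mulr_natr t) /t mulrAC divfK ?pnatr_eq0 -?lt0n //.
  by rewrite mulrBr !mulr_natr expiD expiN !expi_2pi conjc1 mulr1.
have twopi_gt0 : 0 < pi *+ 2 :> R by rewrite mulrn_wgt0 ?pi_gt0.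
apply: expi_neq1; rewrite /t normrM gtr0_norm ?divr_gt0 ?ltr0n //.
have ij_pos : 0 < `|i%:R - j%:R| :> R by rewrite normr_gt0 subr_eq0 eqr_nat.
have ij_lt : `|i%:R - j%:R| < N :> R.
  have : i%:R < N by rewrite ltr_nat.
  have : j%:R < N by rewrite ltr_nat.
  have : 0 <= i%:R :> R by []. have : 0 <= j%:R :> R by [].
  by rewrite ltr_norml; move=> *; apply/andP; split; lra.
rewrite mulr_gt0 ?divr_gt0 ?ltr0n //=.
by rewrite mulrAC ltr_pdivrMr ?ltr0n // ltr_pM2l.
Qed.

End FourierCharacters.


Lemma cauchy_schwarz_sum (R : realFieldType) (I : finType) (a b : I -> R) :
  (\sum_i a i * b i) ^+ 2 <= (\sum_i a i ^+ 2) * (\sum_i b i ^+ 2).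
Proof.
set A := \sum_i a i ^+ 2; set B := \sum_i a i * b i; set Cb := \sum_i b i ^+ 2.
have quad_ge0 t : 0 <= A * t ^+ 2 + 2 * B * t + Cb.
  have -> : A * t ^+ 2 + 2 * B * t + Cb = \sum_i (a i * t + b i) ^+ 2.
    rewrite /A /B /Cb mulr_suml mulr_sumr mulr_suml -!big_split /=.
    by apply: eq_bigr => i _; ring.
  by rewrite sumr_ge0 // => *; rewrite sqr_ge0.
have [A0|A_neq0] := eqVneq A 0.
  have a0 i : a i = 0.
    apply/eqP; rewrite -sqrf_eq0; move/eqP: A0.
    by rewrite psumr_eq0 => [/allP/(_ i (mem_index_enum i))|*]; rewrite ?sqr_ge0.
  by rewrite /B big1 ?expr0n ?mulr_ge0 ?sumr_ge0 //= => i _; rewrite ?a0 ?mul0r ?sqr_ge0.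
have A_gt0 : 0 < A by rewrite lt_def A_neq0 sumr_ge0 // => *; rewrite sqr_ge0.
set u := B / A; have Bu : B = u * A by rewrite /u divfK.
have := quad_ge0 (- u); rewrite Bu; nra.
Qed.

Section ComplexNorm.
Variable R : realType.
Local Notation C := R[i].
Local Notation normc := (@ComplexField.Normc.normc R).

(* Restatements of the morphism lemmas with [conjc] as head symbol, so that
   they rewrite terms written with [^*]. *)
Lemma conjcD (a b : C) : (a + b)^*%C = a^*%C + b^*%C.
Proof. exact: rmorphD. Qed.

Lemma conjcM (a b : C) : (a * b)^*%C = a^*%C * b^*%C.
Proof. exact: rmorphM. Qed.

Lemma conjc_sum (I : Type) (r : seq I) (P : pred I) (f : I -> C) :
  (\sum_(i <- r | P i) f i)^*%C = \sum_(i <- r | P i) (f i)^*%C.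
Proof. exact: rmorph_sum. Qed.

Lemma normc_ge0 (z : C) : 0 <= normc z.
Proof. by case: z => a b; rewrite /= sqrtr_ge0. Qed.

Lemma normcJ (z : C) : normc (z^*)%C = normc z.
Proof. by case: z => a b /=; rewrite sqrrN. Qed.

Lemma normc_real (r : R) : 0 <= r -> normc (r%:C)%C = r.
Proof. by move=> r0 /=; rewrite expr0n addr0 sqrtr_sqr ger0_norm. Qed.

Lemma normc_sqr (z : C) : ((normc z ^+ 2)%:C)%C = z * (z^*)%C.
Proof.
case: z => a b /=; rewrite sqr_sqrtr ?addr_ge0 ?sqr_ge0 //.
by congr (_ +i* _)%C; ring.
Qed.

Lemma normc_sum (I : Type) (r : seq I) (P : pred I) (f : I -> C) :
  normc (\sum_(i <- r | P i) f i) <= \sum_(i <- r | P i) normc (f i).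
Proof.
apply: (big_rec2 (fun a b => normc a <= b)); first by rewrite ComplexField.Normc.normc0.
by move=> i y1 y2 _ h; apply: le_trans (le_normcD _ _) _; exact: lerD.
Qed.

End ComplexNorm.

Section EuclideanNorm.
Variables (R : realType) (n : nat).
Local Notation C := R[i].
Local Notation normc := (@ComplexField.Normc.normc R).
Local Notation vn := (@vnorm2 R n).
Implicit Types x y : 'cV[C]_n.

Lemma vnorm2_ge0 x : 0 <= vn x.
Proof. exact: sqrtr_ge0. Qed.

Lemma vnorm2_sqr x : vn x ^+ 2 = \sum_k normc (x k 0) ^+ 2.
Proof. by rewrite /vnorm2 sqr_sqrtr // sumr_ge0 // => *; rewrite sqr_ge0. Qed.

Lemma vnorm2_0 : vn 0 = 0.
Proof.
by rewrite /vnorm2 big1 ?sqrtr0 // => k _; rewrite mxE ComplexField.Normc.normc0 expr0n.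
Qed.

Lemma eq_vnorm2 x y : (forall k, normc (x k 0) = normc (y k 0)) -> vn x = vn y.
Proof. by move=> xy; rewrite /vnorm2; congr Num.sqrt; apply: eq_bigr => k _; rewrite xy. Qed.

Lemma vnorm2Z c x : vn (c *: x) = normc c * vn x.
Proof.
rewrite /vnorm2 (eq_bigr (fun k => normc c ^+ 2 * normc (x k 0) ^+ 2)); last first.
  by move=> k _; rewrite mxE ComplexField.Normc.normcM exprMn.
by rewrite -mulr_sumr sqrtrM ?sqr_ge0 // sqrtr_sqr ger0_norm // normc_ge0.
Qed.

Lemma normc_le_vnorm2 x k : normc (x k 0) <= vn x.
Proof.
rewrite -(ger0_norm (normc_ge0 (x k 0))) -sqrtr_sqr /vnorm2 ler_sqrt; last first.
  by rewrite sumr_ge0 // => *; rewrite sqr_ge0.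
by rewrite (bigD1 k) //= lerDl; apply: sumr_ge0 => *; exact: sqr_ge0.
Qed.

Lemma vnorm2_eq0 x : vn x = 0 -> x = 0.
Proof.
move=> x0; apply/matrixP => i j; rewrite ord1 mxE; apply: ComplexField.Normc.eq0_normc.
by apply/eqP; rewrite eq_le normc_ge0 andbT -x0 normc_le_vnorm2.
Qed.

Lemma vnorm2D x y : vn (x + y) <= vn x + vn y.
Proof.
set a := fun k => normc (x k 0); set b := fun k => normc (y k 0).
have sqr_le : vn (x + y) ^+ 2 <= \sum_k (a k + b k) ^+ 2.
  rewrite vnorm2_sqr; apply: ler_sum => k _; rewrite mxE.
  by rewrite ler_sqr ?nnegrE ?normc_ge0 ?addr_ge0 ?normc_ge0 //; exact: le_normcD.
have sqr_sum : \sum_k (a k + b k) ^+ 2 = vn x ^+ 2 + vn y ^+ 2 + 2 * \sum_k a k * b k.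
  rewrite !vnorm2_sqr mulr_sumr -!big_split; apply: eq_bigr => k _ /=; rewrite /a /b; ring.
have cross_le : \sum_k a k * b k <= vn x * vn y.
  apply: le_trans (ler_norm _) _.
  rewrite -ler_sqr ?nnegrE ?normr_ge0 ?mulr_ge0 ?vnorm2_ge0 // real_normK ?num_real //.
  by rewrite exprMn !vnorm2_sqr; exact: cauchy_schwarz_sum.
have := vnorm2_ge0 x; have := vnorm2_ge0 y; have := vnorm2_ge0 (x + y) => *.
rewrite -ler_sqr ?nnegrE ?addr_ge0 //; nra.
Qed.

Lemma vnorm2_sum (I : Type) (r : seq I) (P : pred I) (f : I -> 'cV[C]_n) :
  vn (\sum_(i <- r | P i) f i) <= \sum_(i <- r | P i) vn (f i).
Proof.
apply: (big_rec2 (fun a b => vn a <= b)); first by rewrite vnorm2_0.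
by move=> i y1 y2 _ h; apply: le_trans (vnorm2D _ _) _; exact: lerD.
Qed.

End EuclideanNorm.

Section OperatorNorm.
Variables (R : realType) (n : nat).
Local Notation C := R[i].
Local Notation normc := (@ComplexField.Normc.normc R).
Local Notation vn := (@vnorm2 R n).
Implicit Types (x : 'cV[C]_n) (A T : 'M[C]_n).

Lemma opnorm_has_ubound A : has_ubound [set vn (A *m x) | x in [set x | vn x <= 1]].
Proof.
exists (Num.sqrt (\sum_i (\sum_j normc (A i j)) ^+ 2)) => _ [x /= x1 <-].
rewrite /vnorm2 ler_sqrt; last by apply: sumr_ge0 => *; exact: sqr_ge0.
apply: ler_sum => i _.
rewrite ler_sqr ?nnegrE ?normc_ge0 ?sumr_ge0 // => [|*]; last exact: normc_ge0.
rewrite mxE; apply: le_trans (normc_sum _ _ _) _; apply: ler_sum => j _.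
rewrite ComplexField.Normc.normcM -[leRHS]mulr1 ler_wpM2l ?normc_ge0 //.
exact: le_trans (normc_le_vnorm2 _ _) x1.
Qed.

Lemma opnorm_ge0 A : 0 <= opnorm A.
Proof.
apply: (ub_le_sup (opnorm_has_ubound A)).
by exists 0; rewrite /= ?mulmx0 vnorm2_0.
Qed.

Lemma vnorm2_mulmx_le A x : vn (A *m x) <= opnorm A * vn x.
Proof.
have [x0|x_neq0] := eqVneq (vn x) 0.
  by rewrite (vnorm2_eq0 x0) mulmx0 !vnorm2_0 mulr0.
have x_gt0 : 0 < vn x by rewrite lt_def x_neq0 vnorm2_ge0.
set c : C := (((vn x)^-1)%:C)%C.
have cx1 : vn (c *: x) <= 1 by rewrite vnorm2Z normc_real ?invr_ge0 ?vnorm2_ge0 // mulVf.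
have /(ub_le_sup (opnorm_has_ubound A)) : [set vn (A *m x) | x in [set x | vn x <= 1]]
    (vn (A *m (c *: x))) by exists (c *: x).
rewrite /= -scalemxAr vnorm2Z normc_real ?invr_ge0 ?vnorm2_ge0 // => le_opnorm.
by rewrite -ler_pdivrMr // mulrC.
Qed.

Lemma opnorm_le A c : 0 <= c -> (forall x, vn (A *m x) <= c * vn x) -> opnorm A <= c.
Proof.
move=> c0 Ac; apply: ge_sup; first by exists 0, 0; rewrite /= ?mulmx0 vnorm2_0.
by move=> _ [x /= x1 <-]; apply: le_trans (Ac x) _; rewrite -[leRHS]mulr1 ler_wpM2l.
Qed.

Lemma schur_norm_eq T s :
  (forall A, opnorm A <= 1 -> opnorm (schur_mul T A) <= s) ->
  (exists2 A, opnorm A <= 1 & s <= opnorm (schur_mul T A)) ->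
  schur_norm T = s.
Proof.
move=> ub [A0 A01 lb]; apply/eqP; rewrite eq_le; apply/andP; split.
  apply: ge_sup; first by exists (opnorm (schur_mul T A0)), A0.
  by move=> _ [A /= A1 <-]; exact: ub.
apply: le_trans lb _; apply: ub_le_sup; last by exists A0.
by exists s => _ [A /= A1 <-]; exact: ub.
Qed.

End OperatorNorm.

Section FourierMultipliers.
Variables (R : realType) (n : nat).
Hypothesis n_gt0 : (0 < n)%N.
Local Notation C := R[i].
Local Notation normc := (@ComplexField.Normc.normc R).
Local Notation vn := (@vnorm2 R n).
Local Notation E := (@fchar R n).
Local Notation N := (n%:R : R).
Implicit Types (x : 'cV[C]_n) (A : 'M[C]_n) (c : 'I_n -> C).

Definition fourier_mx c : 'M[C]_n :=
  \matrix_(i, j) ((n%:R : C)^-1 * \sum_(k < n) c k * E k i * (E k j)^*%C).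

Definition fvec (k : 'I_n) : 'rV[C]_n := \row_i E k i.

Lemma natrC_neq0 : (n%:R : C) != 0.
Proof. by rewrite pnatr_eq0 -lt0n. Qed.

Lemma normc_invn : normc ((n%:R : C)^-1) = N^-1.
Proof.
rewrite ComplexField.Normc.normcV -[n%:R : C](rmorph_nat (real_complex R)).
by rewrite normc_real.
Qed.

Lemma vnorm2_diag_unimodular (d : 'rV[C]_n) x :
  (forall i, normc (d 0 i) = 1) -> vn (diag_mx d *m x) = vn x.
Proof.
by move=> d1; apply: eq_vnorm2 => i; rewrite mul_diag_mx mxE ComplexField.Normc.normcM d1 mul1r.
Qed.

Lemma schur_fourier_mx c A :
  schur_mul (fourier_mx c) A = \sum_(k < n)
    ((n%:R : C)^-1 * c k) *: (diag_mx (fvec k) *m A *m diag_mx (map_mx (@conjc R) (fvec k))).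
Proof.
apply/matrixP => i j; rewrite summxE.
under [RHS]eq_bigr => k _ do rewrite mul_mx_diag mul_diag_mx !mxE.
rewrite !mxE mulr_sumr mulr_suml; apply: eq_bigr => k _.
by rewrite !mulrA mulrAC.
Qed.

Lemma opnorm_schur_fourier_le c A :
  opnorm (schur_mul (fourier_mx c) A) <= N^-1 * (\sum_k normc (c k)) * opnorm A.
Proof.
apply: opnorm_le => [|x].
  by rewrite !mulr_ge0 ?invr_ge0 ?ler0n ?opnorm_ge0 ?sumr_ge0 // => *; exact: normc_ge0.
rewrite schur_fourier_mx mulmx_suml; apply: le_trans (vnorm2_sum _ _ _) _.
rewrite mulr_sumr !mulr_suml; apply: ler_sum => k _.
rewrite -scalemxAl vnorm2Z ComplexField.Normc.normcM normc_invn -!mulmxA.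
rewrite vnorm2_diag_unimodular => [|i]; last by rewrite mxE normc_fchar.
rewrite -!mulrA !ler_wpM2l ?invr_ge0 ?ler0n ?normc_ge0 //.
apply: le_trans (vnorm2_mulmx_le _ _) _.
by rewrite vnorm2_diag_unimodular // => i; rewrite !mxE normcJ normc_fchar.
Qed.

Local Notation sqn z := (z * (z^*)%C).

Lemma sqnM (a b : C) : sqn (a * b) = sqn a * sqn b.
Proof. by rewrite conjcM mulrACA. Qed.

Lemma sqnJ (a : C) : sqn (a^*%C) = sqn a.
Proof. by rewrite conjcK mulrC. Qed.

Lemma fchar_parseval (a : 'I_n -> C) :
  \sum_(i < n) sqn (\sum_(k < n) a k * E k i) = n%:R * \sum_(k < n) sqn (a k).
Proof.
have sqn_sum (i : 'I_n) : sqn (\sum_(k < n) a k * E k i) =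
    \sum_(k < n) \sum_(l < n) (a k * (a l)^*%C) * (E i k * (E i l)^*%C).
  rewrite conjc_sum mulr_suml; apply: eq_bigr => k _.
  by rewrite mulr_sumr; apply: eq_bigr => l _; rewrite conjcM !(fcharC _ _ _ i) mulrACA.
rewrite (eq_bigr _ (fun i _ => sqn_sum i)) exchange_big mulr_sumr; apply: eq_bigr => k _.
rewrite exchange_big /=.
under eq_bigr => l _ do rewrite -mulr_sumr fchar_orthogonal //.
rewrite (bigD1 k) //= eqxx big1 ?addr0 1?mulrC // => l lk.
by rewrite (_ : (nat_of_ord k == l) = false) ?mulr0 //; apply/negbTE; rewrite eq_sym.
Qed.

Lemma vnorm2_sqrC x : ((vn x ^+ 2)%:C)%C = \sum_(k < n) sqn (x k 0).
Proof. by rewrite vnorm2_sqr rmorph_sum; apply: eq_bigr => k _; exact: normc_sqr. Qed.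

Lemma fourier_mx_mulmxE c x i :
  (fourier_mx c *m x) i 0 = \sum_(k < n)
    ((n%:R : C)^-1 * c k * (\sum_(j < n) (x j 0)^*%C * E j k)^*%C) * E k i.
Proof.
rewrite mxE; under eq_bigr => j _ do rewrite mxE mulr_sumr mulr_suml.
rewrite exchange_big; apply: eq_bigr => k _.
rewrite conjc_sum !mulr_sumr mulr_suml; apply: eq_bigr => j _.
rewrite conjcM conjcK (fcharC _ _ j k) !mulrA [LHS]mulrAC.
by rewrite [_ * E k i * x j 0]mulrAC [LHS]mulrAC.
Qed.

Lemma fourier_mx_isometry c x :
  (forall k, sqn (c k) = 1) -> vn (fourier_mx c *m x) = vn x.
Proof.
move=> c1; apply/eqP; rewrite -(eqrXn2 (isT : (0 < 2)%N)) ?vnorm2_ge0 //.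
apply/eqP/complexI; rewrite !vnorm2_sqrC.
under eq_bigr => i _ do rewrite fourier_mx_mulmxE.
rewrite fchar_parseval.
under eq_bigr => k _ do rewrite !sqnM c1 mulr1 sqnJ.
rewrite -mulr_sumr fchar_parseval conjc_inv conjc_nat -!mulrA mulVKf ?natrC_neq0 //.
rewrite mulKf ?natrC_neq0 //.
by apply: eq_bigr => j _; rewrite sqnJ.
Qed.

End FourierMultipliers.

Section Phase.
Variable R : realType.
Local Notation C := R[i].
Local Notation normc := (@ComplexField.Normc.normc R).

Definition phase (z : C) : C := if z == 0 then 1 else z / ((normc z)%:C)%C.

Lemma phase_mulJ z : phase z * (phase z)^*%C = 1.
Proof.
rewrite -normc_sqr /phase; case: eqP => [_|/eqP z0].
  by rewrite ComplexField.Normc.normc1 expr1n.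
have nz0 : normc z != 0 by apply: contraNneq z0 => /ComplexField.Normc.eq0_normc ->.
rewrite ComplexField.Normc.normcM ComplexField.Normc.normcV normc_real ?normc_ge0 //.
by rewrite mulfV // expr1n.
Qed.

Lemma phase_mulJ_self z : phase z * z^*%C = ((normc z)%:C)%C.
Proof.
rewrite /phase; case: eqP => [->|/eqP z0]; first by rewrite ComplexField.Normc.normc0 conjc0 mulr0.
have nz0 : ((normc z)%:C)%C != 0.
  by apply: contraNneq z0 => -[/ComplexField.Normc.eq0_normc ->].
by rewrite mulrAC -normc_sqr rmorphXn expr2 mulfK.
Qed.

End Phase.

Section ShiftPlusIdentity.
Variables (R : realType) (n : nat).
Hypothesis n_gt0 : (0 < n)%N.
Local Notation C := R[i].
Local Notation normc := (@ComplexField.Normc.normc R).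
Local Notation vn := (@vnorm2 R n).
Local Notation E := (@fchar R n).
Local Notation N := (n%:R : R).
Local Notation ones := (const_mx 1 : 'cV[C]_n).

Definition Tsymbol (k : 'I_n) : C := 1 + (E k 1)^*%C.

Lemma Tmat_entry (i j : 'I_n) :
  Tmat R n i j = (j == ord_pred i)%:R + (j == i)%:R.
Proof.
rewrite !mxE [i == j]eq_sym; congr (_%:R + _).
by rewrite -(can2_eq (@ordSK n) (@ord_predK n)) eq_sym -val_eqE.
Qed.

Lemma fchar_ordS k (j : 'I_n) : E k (ordS j) = E k j * E k 1.
Proof. by rewrite -fcharD addn1 -[RHS](@fchar_modn R n n_gt0). Qed.

Lemma fchar_ord_pred k (i : 'I_n) : E k i = E k (ord_pred i) * E k 1.
Proof. by rewrite -fchar_ordS ord_predK. Qed.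

Lemma Tmat_fourier : Tmat R n = fourier_mx Tsymbol.
Proof.
apply/matrixP => i j; rewrite Tmat_entry mxE.
have -> : \sum_(k < n) Tsymbol k * E k i * (E k j)^*%C =
    \sum_(k < n) E k i * (E k j)^*%C + \sum_(k < n) E k i * (E k (ordS j))^*%C.
  rewrite -big_split; apply: eq_bigr => k _.
  rewrite fchar_ordS conjcM /Tsymbol mulrDl mul1r mulrDl; congr (_ + _).
  by rewrite [_ * E k i]mulrC -mulrA [_ * (E k 1)^*%C]mulrC.
rewrite !fchar_orthogonal // mulrDr addrC [j == i]eq_sym.
rewrite !val_eqE [i == ordS j]eq_sym (can2_eq (@ordSK n) (@ord_predK n)).
by congr (_ + _); case: eqP => _; rewrite ?mulr0 ?mulVf ?natrC_neq0.
Qed.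

Lemma fchar_mulJ_ord_pred k (i : 'I_n) : E k i * (E k (ord_pred i))^*%C = E k 1.
Proof. by rewrite [E k i]fchar_ord_pred mulrAC fchar_mulJ mul1r. Qed.

Lemma schur_Tmat_rowsum (A : 'M[C]_n) i :
  \sum_j Tmat R n i j * A i j = A i (ord_pred i) + A i i.
Proof.
under eq_bigr => j _ do rewrite Tmat_entry mulrDl !mulr_natl !mulrb.
by rewrite big_split /= -!big_mkcond !big_pred1_eq.
Qed.

Lemma normc_Tsymbol k : normc (Tsymbol k) = 2 * `|cos (k%:R * pi / N)|.
Proof.
have angleE : pi *+ 2 / N * (k * 1)%:R = (k%:R * pi / N) *+ 2.
  by rewrite muln1 !mulr2n; field; rewrite pnatr_eq0 -lt0n.
rewrite /Tsymbol /fchar angleE -expiN /expi /= cosN sinN cos_mulr2n sin_mulr2n.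
set c := cos _; set s := sin _.
have -> : (1 + (c ^+ 2 *+ 2 - 1)) ^+ 2 + (0 + - ((c * s) *+ 2)) ^+ 2 = (2 * c) ^+ 2.
  have s2E : s ^+ 2 = 1 - c ^+ 2 by rewrite sin2cos2.
  rewrite (_ : _ + _ = 4 * c ^+ 4 + 4 * c ^+ 2 * s ^+ 2); last by ring.
  by rewrite s2E; ring.
by rewrite sqrtr_sqr normrM ger0_norm.
Qed.

Definition Tnorming_mx : 'M[C]_n := fourier_mx (fun k => phase (Tsymbol k)).

Lemma opnorm_Tnorming_mx : opnorm Tnorming_mx <= 1.
Proof.
apply: opnorm_le => // x; rewrite mul1r fourier_mx_isometry // => k.
exact: phase_mulJ.
Qed.

Definition mean_normc_Tsymbol : R := N^-1 * \sum_(k < n) normc (Tsymbol k).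

Lemma Tnorming_mx_entry_sum k (i : 'I_n) :
  phase (Tsymbol k) * E k i * (E k (ord_pred i))^*%C + phase (Tsymbol k) * E k i * (E k i)^*%C
  = ((normc (Tsymbol k))%:C)%C.
Proof.
rewrite -!mulrA fchar_mulJ_ord_pred fchar_mulJ -mulrDr addrC.
by rewrite -[1 + E k 1]conjcK conjcD conjc1 -/(Tsymbol k) phase_mulJ_self.
Qed.

Lemma schur_Tnorming_ones :
  schur_mul (Tmat R n) Tnorming_mx *m ones = (mean_normc_Tsymbol%:C)%C *: ones.
Proof.
apply/matrixP => i l; rewrite ord1 [RHS]mxE [const_mx _ _ _]mxE mulr1 mxE.
under eq_bigr => j _ do rewrite [const_mx _ _ _]mxE mulr1 [schur_mul _ _ _ _]mxE.
rewrite schur_Tmat_rowsum !mxE -mulrDr /mean_normc_Tsymbol rmorphM fmorphV rmorph_nat rmorph_sum.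
by rewrite -big_split (eq_bigr _ (fun k _ => Tnorming_mx_entry_sum k i)).
Qed.

Lemma schur_norm_Tmat : schur_norm (Tmat R n) = mean_normc_Tsymbol.
Proof.
have mean_ge0 : 0 <= mean_normc_Tsymbol.
  by rewrite mulr_ge0 ?invr_ge0 ?ler0n ?sumr_ge0 // => *; exact: normc_ge0.
apply: schur_norm_eq => [A A1|].
  rewrite Tmat_fourier; apply: le_trans; first exact: opnorm_schur_fourier_le.
  by rewrite -/mean_normc_Tsymbol -[leRHS]mulr1 ler_wpM2l.
exists Tnorming_mx; first exact: opnorm_Tnorming_mx.
have := vnorm2_mulmx_le (schur_mul (Tmat R n) Tnorming_mx) ones.
rewrite schur_Tnorming_ones vnorm2Z normc_real //.
have ones_gt0 : 0 < vn ones.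
  rewrite /vnorm2 sqrtr_gt0 (eq_bigr (fun _ => 1)) ?sumr_const ?card_ord ?ltr0n //.
  by move=> k _; rewrite mxE ComplexField.Normc.normc1 expr1n.
by rewrite ler_pM2r.
Qed.

End ShiftPlusIdentity.

Lemma sum_cos_even_telescope (R : realType) (h : R) K :
  2 * sin h * \sum_(k < K.+1) cos ((2 * k)%:R * h) = sin ((2 * K).+1%:R * h) + sin h.
Proof.
elim: K => [|K IH]; first by rewrite big_ord1 /= muln0 mul0r cos0 mulr1 mul1r; ring.
rewrite big_ord_recr /= mulrDr IH.
set a := (2 * K.+1)%:R * h.
have -> : (2 * K.+1).+1%:R * h = a + h by rewrite /a -addn1 natrD; ring.
have -> : (2 * K).+1%:R * h = a - h by rewrite /a mulnS -addn1 addSn !natrD /=; ring.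
by rewrite !sinD cosN sinN; ring.
Qed.

Definition pi_div2n (R : realType) (n : nat) : R := pi / (2 * n%:R).

Section PiDiv2n.
Context {R : realType}.
Local Notation h n := (pi_div2n R n).

Lemma pi_div2nE n : (0 < n)%N -> pi = h n * (2 * n%:R).
Proof. by move=> n_gt0; rewrite divfK // mulf_neq0 // pnatr_eq0 -lt0n. Qed.

Lemma pi_div2n_gt0 n : (0 < n)%N -> 0 < h n.
Proof. by move=> n_gt0; rewrite divr_gt0 ?pi_gt0 // mulr_gt0 // ltr0n. Qed.

Lemma pi_div2n_le n : (0 < n)%N -> h n <= pi / 2.
Proof.
move=> n_gt0; rewrite ler_pdivrMr ?mulr_gt0 ?ltr0n // mulrA divfK //.
have : 1 <= n%:R :> R by rewrite ler1n.
have := pi_gt0 R; nra.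
Qed.

Lemma pi_div2n_lt n : (1 < n)%N -> h n < pi / 2.
Proof.
move=> n_gt1; rewrite ltr_pdivrMr ?mulr_gt0 ?ltr0n 1?ltnW // mulrA divfK //.
have : 2 <= n%:R :> R by rewrite ler_nat.
have := pi_gt0 R; nra.
Qed.

Lemma pi_div2nSS n : (0 < n)%N -> h n.+2 < h n.
Proof.
move=> n_gt0; rewrite ltr_pM2l ?pi_gt0 // ltf_pV2 ?qualifE /= ?mulr_gt0 ?ltr0n //.
by rewrite ltr_pM2l // ltr_nat.
Qed.

Lemma sin_pi_div2n_gt0 n : (0 < n)%N -> 0 < sin (h n).
Proof.
move=> n_gt0; apply: sin_gt0_pi; rewrite pi_div2n_gt0 //=.
by have := pi_div2n_le n_gt0; have := pi_gt0 R; lra.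
Qed.

End PiDiv2n.

Section ClosedForm.
Variables (R : realType) (n : nat).
Hypothesis n_gt0 : (0 < n)%N.
Local Notation N := (n%:R : R).
Local Notation h := (pi_div2n R n).

Let piE : pi = h * (2 * N) := pi_div2nE n_gt0.
Let h_gt0 : 0 < h := pi_div2n_gt0 n_gt0.
Let sin_h_gt0 : 0 < sin h := sin_pi_div2n_gt0 n_gt0.

Lemma sum_cos_even : \sum_(k < n) cos ((2 * k)%:R * h) = 1.
Proof.
have := sum_cos_even_telescope h n.-1; rewrite prednK //.
have -> : (2 * n.-1).+1%:R * h = pi - h.
  have -> : (2 * n.-1).+1%:R = 2 * N - 1 :> R by rewrite -[in RHS](prednK n_gt0); ring.
  by rewrite [in RHS]piE; ring.
rewrite sinB cospi sinpi => sumE.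
apply: (mulfI (_ : 2 * sin h != 0)); first by rewrite mulf_neq0 // gt_eqF // sin_h_gt0.
by rewrite sumE mulr1; ring.
Qed.

Lemma angle_pi_div2nE (k : nat) : k%:R * pi / N = (2 * k)%:R * h.
Proof. by rewrite [in LHS]piE natrM; field; rewrite pnatr_eq0 -lt0n. Qed.

Lemma abs_cos_even (k : nat) : (k < n)%N -> `|cos ((2 * k)%:R * h)| =
  if (2 * k < n)%N then cos ((2 * k)%:R * h) else - cos ((2 * k)%:R * h).
Proof.
move=> kn; have := piE; have := h_gt0; have := pi_gt0 R.
have : k%:R < N by rewrite ltr_nat.
have : 0 <= k%:R :> R by [].
rewrite natrM; case: ifP => k_half.
  have : (2 * k + 1 <= n)%N by lia.
  rewrite -(ler_nat R) natrD natrM /= => *.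
  by apply: ger0_norm; apply: cos_ge0_pihalf; apply/andP; split; nra.
have : (n <= 2 * k)%N by lia.
rewrite -(ler_nat R) natrM /= => *.
apply: ler0_norm; rewrite -[_ * h](subrK (pi / 2)) cosDpihalf oppr_le0.
by apply: sin_ge0_pi; apply/andP; split; nra.
Qed.

Lemma sum_abs_cos_closed_form : 2 / N * \sum_(k < n) `|cos (k%:R * pi / N)| =
  if ~~ odd n then 2 * cos h / (N * sin h) else 2 / (N * sin h).
Proof.
set m := (n.+1 %/ 2)%N; set F := fun k : nat => cos ((2 * k)%:R * h).
have m_gt0 : (0 < m)%N by rewrite /m; lia.
(* cos (2 k h) >= 0 exactly when 2 k < n, i.e. when k < m. *)
have sumE : \sum_(k < n) `|cos (k%:R * pi / N)| = 2 * \sum_(k < m) F k - \sum_(k < n) F k.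
  rewrite (big_ord_widen n F (_ : m <= n)%N) /m; last by lia.
  rewrite [X in 2 * X]big_mkcond mulr_sumr -sumrB; apply: eq_bigr => k _.
  rewrite angle_pi_div2nE abs_cos_even // (_ : (k < m)%N = (2 * k < n)%N) /m; last first.
    by apply/idP/idP; lia.
  by case: ifP => _; rewrite /F; ring.
have s_neq0 : sin h != 0 by rewrite gt_eqF // sin_h_gt0.
have N_neq0 : N != 0 by rewrite pnatr_eq0 -lt0n.
have := sum_cos_even_telescope h m.-1; rewrite prednK // => telescope.
rewrite sumE sum_cos_even.
have -> : \sum_(k < m) F k = (sin ((2 * m.-1).+1%:R * h) + sin h) / (2 * sin h).
  by rewrite -telescope mulrAC mulfV ?mul1r // mulf_neq0.
have := odd_double_half n; rewrite -mul2n.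
case: ifP => [/negbTE|/negbFE] -> nE.
  have -> : (2 * m.-1).+1%:R * h = pi / 2 - h.
    rewrite [in RHS]piE (_ : (2 * m.-1).+1 = n - 1)%N /m; last by lia.
    by rewrite natrB; [field | lia].
  by rewrite sinB sin_pihalf cos_pihalf; field; apply/andP.
have -> : (2 * m.-1).+1%:R * h = pi / 2.
  by rewrite [in RHS]piE (_ : (2 * m.-1).+1 = n)%N /m; [field | lia].
by rewrite sin_pihalf; field; apply/andP.
Qed.

End ClosedForm.

Section RealDerivatives.
Variable R : realType.
Implicit Types (a b : R) (f df : R -> R).

Lemma is_derive_lt0_decr a b f df : a < b ->
  (forall c, a <= c <= b -> is_derive c 1 f (df c)) ->
  (forall c, a < c < b -> df c < 0) -> f b < f a.
Proof.
move=> ab f_df df_lt0; rewrite -subr_lt0.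
have [c cab ->] : exists2 c, c \in `]a, b[%R & f b - f a = df c * (b - a).
  apply: MVT => // [c|]; first by rewrite in_itv /= => /andP[ac cb]; apply: f_df; rewrite !ltW.
  apply: derivable_within_continuous => c; rewrite in_itv /= => /f_df f_dfc.
  exact: ex_derive.
by rewrite nmulr_rlt0 ?subr_gt0 // df_lt0 // -in_itv.
Qed.

Lemma is_derive_gt0_incr a b f df : a < b ->
  (forall c, a <= c <= b -> is_derive c 1 f (df c)) ->
  (forall c, a < c < b -> 0 < df c) -> f a < f b.
Proof.
move=> ab f_df df_gt0; rewrite -ltrN2.
apply: (@is_derive_lt0_decr a b (- f) (- df)) => // c cab.
  by apply: is_deriveN; exact: f_df.
by rewrite /= oppr_lt0 df_gt0.
Qed.

Lemma is_deriveV (f : R -> R) x v (df : R) : f x != 0 -> is_derive x v f df ->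
  is_derive x v (fun y => (f y)^-1) (- (f x) ^- 2 * df).
Proof.
move=> fx_neq0 f_df; have f_der : derivable f x v by exact: ex_derive.
by apply: DeriveDef; [exact: derivableV | rewrite deriveV // derive_val].
Qed.

End RealDerivatives.

Section TrigInequalities.
Variable R : realType.
Implicit Types x y : R.

Lemma mul_cos_lt_sin x : 0 < x < pi -> x * cos x < sin x.
Proof.
move=> /andP[x_gt0 x_ltpi].
have : (sin - id * cos) 0 < (sin - id * cos) x :> R.
  apply: (@is_derive_gt0_incr _ 0 x _ (fun c => c * sin c)) => // [c _|c /andP[c0 cx]].
    apply: is_derive_eq (is_deriveB (is_derive_sin c)
      (is_deriveM (is_derive_id c 1) (is_derive_cos c))) _.
    by change (cos c - (c * - sin c + cos c * 1) = c * sin c); ring.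
  by rewrite mulr_gt0 // sin_gt0_pi // c0 (lt_trans cx).
by rewrite !fctE /= sin0 mul0r subr0 subr_gt0.
Qed.

Lemma sin_mul_cos_lt x : 0 < x < pi -> sin x * cos x < x.
Proof.
move=> /andP[x_gt0 x_ltpi].
have : (id - sin * cos) 0 < (id - sin * cos) x :> R.
  apply: (@is_derive_gt0_incr _ 0 x _ (fun c => 2 * sin c ^+ 2)) => // [c _|c /andP[c0 cx]].
    apply: is_derive_eq (is_deriveB (is_derive_id c 1)
      (is_deriveM (is_derive_sin c) (is_derive_cos c))) _.
    change (1 - (sin c * - sin c + cos c * cos c) = 2 * sin c ^+ 2).
    by have := cos2Dsin2 c; nra.
  by rewrite mulr_gt0 // exprn_gt0 // sin_gt0_pi // c0 (lt_trans cx).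
by rewrite !fctE /= sin0 mul0r subr0 subr_gt0.
Qed.

Lemma sin_lt_id x : 0 < x < pi -> sin x < x.
Proof.
move=> /andP[x_gt0 x_ltpi].
have -> : sin x = 2 * (sin (x / 2) * cos (x / 2)).
  by rewrite -{1}(divfK (_ : 2 != 0 :> R) x) // mulr_natr sin_mulr2n mulr2n mulrC; ring.
have : sin (x / 2) * cos (x / 2) < x / 2 by apply: sin_mul_cos_lt; apply/andP; split; lra.
lra.
Qed.

Lemma sin_div_decr x y : 0 < y -> y < x -> x < pi -> sin x / x < sin y / y.
Proof.
move=> y_gt0 yx x_ltpi; have c_gt0 c : y <= c -> 0 < c by apply: lt_le_trans.
apply: (@is_derive_lt0_decr _ y x (sin * (fun t => t^-1))
  (fun c => (c * cos c - sin c) / c ^+ 2)) => // [c /andP[yc cx]|c /andP[yc cx]].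
  have c_neq0 : c != 0 by rewrite gt_eqF // c_gt0.
  apply: is_derive_eq (is_deriveM (is_derive_sin c) (is_deriveV c_neq0 (is_derive_id c 1))) _.
  change (sin c * (- c ^- 2 * 1) + c^-1 * cos c = (c * cos c - sin c) / c ^+ 2).
  by field.
rewrite pmulr_llt0 ?invr_gt0 ?exprn_gt0 ?c_gt0 ?ltW // subr_lt0.
by apply: mul_cos_lt_sin; rewrite c_gt0 ?ltW //= (lt_trans cx).
Qed.

Lemma mul_cot_decr x y : 0 < y -> y < x -> x < pi ->
  x * cos x / sin x < y * cos y / sin y.
Proof.
move=> y_gt0 yx x_ltpi; have c_gt0 c : y <= c -> 0 < c by apply: lt_le_trans.
have sin_gt0 c : y <= c -> c <= x -> 0 < sin c.
  by move=> yc cx; apply: sin_gt0_pi; rewrite c_gt0 //= (le_lt_trans cx).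
apply: (@is_derive_lt0_decr _ y x ((id * cos) * (fun t => (sin t)^-1))
  (fun c => (sin c * cos c - c) / sin c ^+ 2)) => // [c /andP[yc cx]|c /andP[yc cx]].
  have s_neq0 : sin c != 0 by rewrite gt_eqF // sin_gt0.
  apply: is_derive_eq (is_deriveM (is_deriveM (is_derive_id c 1) (is_derive_cos c))
    (is_deriveV s_neq0 (is_derive_sin c))) _.
  change (c * cos c * (- sin c ^- 2 * cos c) + (sin c)^-1 * (c * - sin c + cos c * 1)
    = (sin c * cos c - c) / sin c ^+ 2).
  have cE : c = c * (cos c ^+ 2 + sin c ^+ 2) by rewrite cos2Dsin2 mulr1.
  by rewrite [X in _ = (_ - X) / _]cE; field.
rewrite pmulr_llt0 ?invr_gt0 ?exprn_gt0 ?sin_gt0 ?ltW // subr_lt0.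
by apply: sin_mul_cos_lt; rewrite c_gt0 ?ltW //= (lt_trans cx).
Qed.

End TrigInequalities.

Section SchurNormShiftPlusIdentity.
Variable R : realType.
Local Notation h n := (pi_div2n R n).

Lemma schur_norm_Tmat_sum n : (0 < n)%N ->
  schur_norm (Tmat R n) = 2 / n%:R * \sum_(k < n) `|cos (k%:R * pi / n%:R)|.
Proof.
move=> n_gt0; rewrite schur_norm_Tmat // /mean_normc_Tsymbol.
rewrite (eq_bigr _ (fun k _ => normc_Tsymbol R n_gt0 k)) -mulr_sumr mulrA.
by rewrite [_^-1 * 2]mulrC.
Qed.

Lemma schur_norm_Tmat_closed n : (0 < n)%N -> schur_norm (Tmat R n) =
  if ~~ odd n then 2 * cos (h n) / (n%:R * sin (h n)) else 2 / (n%:R * sin (h n)).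
Proof. by move=> n_gt0; rewrite schur_norm_Tmat_sum // sum_abs_cos_closed_form. Qed.

Lemma schur_norm_Tmat_odd n : odd n ->
  schur_norm (Tmat R n) = 4 / pi / (sin (h n) / h n).
Proof.
move=> n_odd; have n_gt0 : (0 < n)%N by case: n n_odd.
rewrite schur_norm_Tmat_closed // n_odd /=.
have := sin_pi_div2n_gt0 (R := R) n_gt0; set s := sin _ => s_gt0.
have n_neq0 : n%:R != 0 :> R by rewrite pnatr_eq0 -lt0n.
have pi_neq0 : pi != 0 :> R by rewrite gt_eqF ?pi_gt0.
by rewrite /pi_div2n; move: (pi : R) pi_neq0 => p p_neq0; field; rewrite n_neq0 p_neq0 (gt_eqF s_gt0).
Qed.

Lemma schur_norm_Tmat_even n : (0 < n)%N -> ~~ odd n ->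
  schur_norm (Tmat R n) = 4 / pi * (h n * cos (h n) / sin (h n)).
Proof.
move=> n_gt0 n_even; rewrite schur_norm_Tmat_closed // n_even.
have := sin_pi_div2n_gt0 (R := R) n_gt0; set s := sin _ => s_gt0; set c := cos _.
have n_neq0 : n%:R != 0 :> R by rewrite pnatr_eq0 -lt0n.
have pi_neq0 : pi != 0 :> R by rewrite gt_eqF ?pi_gt0.
by rewrite /pi_div2n; move: (pi : R) pi_neq0 => p p_neq0; field; rewrite n_neq0 p_neq0 (gt_eqF s_gt0).
Qed.

Lemma schur_norm_Tmat_oddSS n : odd n ->
  schur_norm (Tmat R n.+2) < schur_norm (Tmat R n).
Proof.
move=> n_odd; have n_gt0 : (0 < n)%N by case: n n_odd.
have nSS_odd : odd n.+2 by rewrite /= negbK.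
have ratio_gt0 k : (0 < k)%N -> 0 < sin (h k) / h k.
  by move=> k_gt0; rewrite divr_gt0 ?sin_pi_div2n_gt0 ?pi_div2n_gt0.
rewrite !schur_norm_Tmat_odd // ltr_pM2l ?divr_gt0 ?pi_gt0 //.
rewrite ltf_pV2 ?posrE ?ratio_gt0 //.
apply: sin_div_decr (pi_div2nSS n_gt0) _; first exact: pi_div2n_gt0.
by have := pi_div2n_le (R := R) n_gt0; have := pi_gt0 R; lra.
Qed.

Lemma schur_norm_Tmat_evenSS n : (0 < n)%N -> ~~ odd n ->
  schur_norm (Tmat R n) < schur_norm (Tmat R n.+2).
Proof.
move=> n_gt0 n_even.
have nSS_even : ~~ odd n.+2 by rewrite /= negbK.
rewrite !schur_norm_Tmat_even // ltr_pM2l ?divr_gt0 ?pi_gt0 //.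
apply: mul_cot_decr (pi_div2nSS n_gt0) _; first exact: pi_div2n_gt0.
by have := pi_div2n_le (R := R) n_gt0; have := pi_gt0 R; lra.
Qed.

Lemma schur_norm_Tmat_bounds n : (1 < n)%N ->
  4 / pi * cos (h n) <= schur_norm (Tmat R n) <= 4 / pi / cos (h n).
Proof.
move=> n_gt1; have n_gt0 : (0 < n)%N by apply: ltnW.
have t_gt0 := pi_div2n_gt0 (R := R) n_gt0; have t_lt := pi_div2n_lt (R := R) n_gt1.
have pi_gt0 := pi_gt0 R.
have t_range : 0 < h n < pi by rewrite t_gt0 /=; lra.
have s_gt0 : 0 < sin (h n) by apply: sin_gt0_pi.
have c_gt0 : 0 < cos (h n) by apply: cos_gt0_pihalf; apply/andP; split; lra.
have key u : cos (h n) <= u -> u * cos (h n) <= 1 ->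
    4 / pi * cos (h n) <= 4 / pi * u <= 4 / pi / cos (h n).
  by move=> cu uc; rewrite !ler_pM2l ?divr_gt0 // cu -div1r ler_pdivlMr.
have := mul_cos_lt_sin t_range; have := sin_mul_cos_lt t_range.
have := sin_lt_id t_range; have := cos_le1 (h n) => c_le1 s_lt sc_lt tc_lt.
have [n_odd|n_even] := boolP (odd n).
  rewrite schur_norm_Tmat_odd // invf_div; apply: key.
    by rewrite ler_pdivlMr //; lra.
  by rewrite mulrAC ler_pdivrMr // mul1r; lra.
rewrite schur_norm_Tmat_even //; apply: key.
  by rewrite ler_pdivlMr // mulrC ler_pM2r // ltW.
rewrite mulrAC ler_pdivrMr // mul1r; apply: le_trans (ltW tc_lt).
exact: ler_piMr (mulr_ge0 (ltW t_gt0) (ltW c_gt0)) c_le1.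
Qed.

Lemma pi_div2n_cvg0 : h n @[n --> \oo] --> 0.
Proof.
apply: (@squeeze_cvgr _ _ _ _ (fun=> 0) (fun n => pi * harmonic n)).
- near=> n; have n_gt0 : (0 < n)%N by near: n; exact: nbhs_infty_ge.
  rewrite ltW ?pi_div2n_gt0 //= ler_pdivrMr ?mulr_gt0 ?ltr0n //.
  rewrite -mulrA ler_peMr ?pi_ge0 // mulrC ler_pdivlMr ?ltr0n // mul1r.
  have : 1 <= n%:R :> R by rewrite ler1n.
  by rewrite -natr1; lra.
- exact: cvg_cst.
- by rewrite -[X in _ --> X](mulr0 pi); apply: cvgMl_tmp; exact: cvg_harmonic.
Unshelve. all: by end_near.
Qed.

Lemma schur_norm_Tmat_cvg : schur_norm (Tmat R n) @[n --> \oo] --> 4 / (pi : R).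
Proof.
have cos_cvg1 : cos (h n) @[n --> \oo] --> (1 : R).
  by rewrite -cos0; apply: continuous_cvg pi_div2n_cvg0; exact: continuous_cos.
apply: (@squeeze_cvgr _ _ _ _ (fun n => 4 / pi * cos (h n)) (fun n => 4 / pi / cos (h n))).
- near=> n; apply: schur_norm_Tmat_bounds.
  by near: n; exact: nbhs_infty_gt.
- by rewrite -[X in _ --> X]mulr1; apply: cvgMl_tmp.
- rewrite -[X in _ --> X]mulr1; apply: cvgMl_tmp.
  by rewrite -invr1; apply: cvgV; rewrite ?oner_neq0.
Unshelve. all: by end_near.
Qed.


End SchurNormShiftPlusIdentity.

Theorem mainTheorem14 (R : realType) :
  (forall n : nat, (3 <= n)%N ->
     schur_norm (Tmat R n)
       = 2 / n%:R * \sum_(k < n) `|cos (k%:R * pi / n%:R)|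
   /\ schur_norm (Tmat R n)
       = (if ~~ odd n
          then 2 * cos (pi / (2 * n%:R)) / (n%:R * sin (pi / (2 * n%:R)))
          else 2 / (n%:R * sin (pi / (2 * n%:R))))) /\
  ((fun n : nat => schur_norm (Tmat R n)) @ \oo --> 4 / (pi : R)) /\
  (forall n : nat, (3 <= n)%N -> odd n ->
     schur_norm (Tmat R n.+2) < schur_norm (Tmat R n)) /\
  (forall n : nat, (3 <= n)%N -> ~~ odd n ->
     schur_norm (Tmat R n) < schur_norm (Tmat R n.+2)).
Proof.
split; [|split; [exact: schur_norm_Tmat_cvg | split]].
- move=> n n_ge3; have n_gt0 : (0 < n)%N by apply: leq_trans n_ge3.
  by split; [exact: schur_norm_Tmat_sum | exact: schur_norm_Tmat_closed].
- by move=> n _; exact: schur_norm_Tmat_oddSS.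
- by move=> n n_ge3; apply: schur_norm_Tmat_evenSS; apply: leq_trans n_ge3.
Qed.
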